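(* Let $\{X^{(n)}(t),t\ge0\}$, $n\in\mathbb N$, be a family of Markov processes on $V_n$ with generators $L_n$, and let $\{\eta(t),t\ge0\}$ be a Markov configuration process on $\Omega$ with generator $\mathcal L$ satisfying $L_n U_\phi=U_\phi\mathcal L$ on functions $\Omega_n\to\mathbb R$ for every $n$. Then the following are equivalent: (a) for every $n\in\mathbb N$ and every permutation-invariant $g:V_{n-1}\to\mathbb R$, $L_n\Pi^{(n)}g=\Pi^{(n)}L_{n-1}g$; (b) $[\mathcal L,\mathcal A]=0$.
   Context: $V$ is a countable set, $\Lambda\subseteq\mathbb N_0$ the single-site state space. For $\mathbf x\in V^n$, $\phi(\mathbf x):=\sum_{i=1}^n\delta_{x_i}$. $\Omega_n:=\{\eta\in\Lambda^V:\sum_x\eta_x=n\}$, $\Omega=\bigcup_n\Omega_n$, $V_n:=\{\mathbf x\in V^n:\phi(\mathbf x)\in\Omega_n\}$, $U_\phi f:=f\circ\phi$. A function $g$ of $n$ variables is permutation-invariant if $g(x_1,\dots,x_n)=g(x_{\sigma(1)},\dots,x_{\sigma(n)})$ for all permutations $\sigma$. For $g$ a function of $n-1$ variables, $(\Pi^{(n)}g)(x_1,\dots,x_n):=\sum_{i=1}^n g(x_1,\dots,x_{i-1},x_{i+1},\dots,x_n)$. The annihilation operator acts on $f:\Omega\to\mathbb R$ by $\mathcal Af(\eta)=\sum_{x\in V}a_xf(\eta)$, where $a_xf(\eta)=\eta_xf(\eta-\delta_x)$ if $\eta_x\ge1$ and $0$ if $\eta_x=0$. $[\cdot,\cdot]$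 denotes the commutator. *)

From HB Require Import structures.
From mathcomp Require Import all_boot all_order all_fingroup all_algebra.
From mathcomp Require Import all_classical all_reals.
Set Implicit Arguments. Unset Strict Implicit. Unset Printing Implicit Defensive.
Import Order.TTheory GRing.Theory Num.Theory.
Local Open Scope ring_scope.
Local Open Scope classical_set_scope.

(* Configurations: eta : V -> nat (eta x = number of particles at x).
   Functions on Omega (resp. V_n) are encoded as total functions whose values
   only matter on Omega (resp. V_n). *)

Definition in_Omega (V : choiceType) (Lam : pred nat) (n : nat)
    (eta : V -> nat) : Prop :=
  (forall x, Lam (eta x)) /\ finite_set [set x | eta x != 0%N] /\
  (\sum_(x \in [set: V]) eta x)%R = n.

Definition in_OmegaAll (V : choiceType) (Lam : pred nat) (eta : V -> nat) : Prop :=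
  exists n, in_Omega Lam n eta.

Definition phi (V : eqType) (n : nat) (x : 'I_n -> V) : V -> nat :=
  fun y => #|[pred i : 'I_n | x i == y]|.

Definition in_Vn (V : choiceType) (Lam : pred nat) (n : nat) (x : 'I_n -> V) : Prop :=
  in_Omega Lam n (phi x).

Definition Uphi (V : eqType) (R : Type) (n : nat) (f : (V -> nat) -> R) :
  ('I_n -> V) -> R := fun x => f (phi x).

Definition sub_delta (V : eqType) (eta : V -> nat) (x : V) : V -> nat :=
  fun y => if y == x then (eta y).-1 else eta y.

Definition a_op (V : eqType) (R : realType) (x : V) (f : (V -> nat) -> R)
    (eta : V -> nat) : R :=
  if (0 < eta x)%N then (eta x)%:R * f (sub_delta eta x) else 0.

Definition Aop (V : choiceType) (R : realType) (f : (V -> nat) -> R)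
    (eta : V -> nat) : R :=
  \sum_(x \in [set: V]) a_op x f eta.

Definition drop_coord (V : Type) (n : nat) (x : 'I_n.+1 -> V) (i : 'I_n.+1) :
  'I_n -> V := fun j => x (lift i j).

Definition Pi (V : Type) (R : realType) (n : nat) (g : ('I_n -> V) -> R) :
  ('I_n.+1 -> V) -> R :=
  fun x => \sum_(i < n.+1) g (drop_coord x i).

Definition perm_invariant (V : choiceType) (Lam : pred nat) (R : Type) (n : nat)
    (g : ('I_n -> V) -> R) : Prop :=
  forall (s : {perm 'I_n}) (x : 'I_n -> V), in_Vn Lam x -> g (x \o s) = g x.


Definition op_on (X : Type) (R : realType) (P : X -> Prop)
    (T : (X -> R) -> (X -> R)) : Prop :=
  (forall f g, (forall x, P x -> f x = g x) -> forall x, P x -> T f x = T g x) /\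
  (forall (a : R) f g x, P x ->
     (T (fun y => a * f y + g y) x = a * T f x + T g x)%R).

From HB Require Import structures.
From mathcomp Require Import all_boot all_order all_fingroup all_algebra.
From mathcomp Require Import all_classical all_reals.
Set Implicit Arguments. Unset Strict Implicit. Unset Printing Implicit Defensive.
Import Order.TTheory GRing.Theory Num.Theory.
Local Open Scope ring_scope.
Local Open Scope classical_set_scope.

(* Forgetting the labels of the particles intertwines the annihilation operator
   with Pi: removing one particle at site x_i from phi x is the same as deleting
   the i-th coordinate of x, so U_phi (A f) = Pi (U_phi f) on V_(n+1).  Together
   with L_n U_phi = U_phi L, this turns both sides of (a) for g = U_phi f into
   the two sides of (b) evaluated at phi x.  Since phi maps V_n onto Omega_n and
   its fibres are the permutation orbits, the permutation-invariant g are
   exactly the functions U_phi f, so (a) and (b) are equivalent; on Omega_0 both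
   sides of (b) vanish. *)

Lemma phiE (V : eqType) m (y : 'I_m -> V) z : phi y z = (\sum_(i < m) (y i == z))%N.
Proof.
rewrite /phi -sum1_card big_mkcond /=; apply: eq_bigr => i _.
by rewrite inE; case: (y i == z).
Qed.

Lemma phi_notin_codom (V : eqType) m (y : 'I_m -> V) z :
  z \notin codom y -> phi y z = 0%N.
Proof.
move=> z_y; rewrite phiE big1 // => i _.
by case: eqP => // yi_z; rewrite -yi_z codom_f in z_y.
Qed.

Lemma phi_comp_perm (V : eqType) m (y : 'I_m -> V) (s : {perm 'I_m}) :
  phi (y \o s) = phi y.
Proof.
by apply: funext => z; rewrite !phiE [RHS](reindex_inj (@perm_inj _ s)).
Qed.

Lemma phi_drop_coord (V : eqType) m (x : 'I_m.+1 -> V) i :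
  phi (drop_coord x i) = sub_delta (phi x) (x i).
Proof.
apply: funext => z; rewrite /sub_delta !phiE (bigD1_ord i) //=.
by rewrite eq_sym; case: eqP.
Qed.

Lemma sumr_mulrn_eq (T : eqType) (M : nmodType) (s : seq T) (F : T -> M) z :
  uniq s -> \sum_(x <- s) F x *+ (x == z) = F z *+ (z \in s).
Proof.
move=> s_uniq; have [zs|zNs] := boolP (z \in s).
  by rewrite (bigD1_seq z) //= eqxx big1 ?addr0 // => x /negbTE ->.
rewrite big1_seq // => x /andP[_ xs].
by case: eqP xs => // ->; rewrite (negbTE zNs).
Qed.

Lemma fsbig_phi (V : choiceType) (M : nmodType) m (y : 'I_m -> V) (G : V -> M) :
  \sum_(z \in [set: V]) G z *+ phi y z = \sum_(i < m) G (y i).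
Proof.
rewrite (fsbigE (undup (codom y))) ?undup_uniq //; last first.
  by move=> z _; rewrite mem_undup => /phi_notin_codom ->.
under eq_bigl do rewrite in_setT.
under eq_bigr do rewrite phiE -sumrMnr.
rewrite exchange_big /=; apply: eq_bigr => i _.
under eq_bigr do rewrite eq_sym.
by rewrite sumr_mulrn_eq ?undup_uniq // mem_undup codom_f.
Qed.

Lemma mass_phi (V : choiceType) m (y : 'I_m -> V) :
  \sum_(z \in [set: V]) phi y z = m.
Proof.
transitivity (\sum_(z \in [set: V]) 1%N *+ phi y z).
  by apply: (@eq_fsbigr nat 0%N +%R) => z _; rewrite natn.
by rewrite fsbig_phi sumr_const card_ord natn.
Qed.

Lemma phi_count (V : eqType) m (y : 'I_m -> V) z :
  phi y z = count_mem z [seq y i | i <- enum 'I_m].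
Proof. by rewrite count_map -size_filter /phi cardE /enum_mem filter_predT. Qed.

Lemma phi_eq_perm (V : eqType) m (y y' : 'I_m -> V) :
  phi y = phi y' -> exists s : {perm 'I_m}, y' = y \o s.
Proof.
move=> phi_yy'.
have : perm_eq [tuple y' i | i < m] [tuple y i | i < m].
  by apply/allP => z _ /=; rewrite -!phi_count phi_yy'.
case/tuple_permP => s Es; exists s; apply: funext => i.
have := congr1 (fun t : seq V => nth (y' i) t i) Es.
by rewrite -!tnth_nth !tnth_mktuple.
Qed.

Lemma phi_onto (V : choiceType) n (eta : V -> nat) :
  finite_set [set z | eta z != 0%N] -> \sum_(z \in [set: V]) eta z = n ->
  exists y : 'I_n -> V, phi y = eta.
Proof.
case/finite_seqP => s0 supp_eta mass_eta; set s := undup s0.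
have s_uniq : uniq s := undup_uniq s0.
have mem_s z : (z \in s) = (eta z != 0%N).
  rewrite mem_undup; apply/idP/idP => h.
    by have : [set` s0] z by []; rewrite -supp_eta.
  by have : [set z | eta z != 0%N] z by []; rewrite supp_eta.
rewrite (fsbigE s) //= in mass_eta; last by move=> z _; rewrite mem_s negbK => /eqP.
set t := flatten [seq nseq (eta z) z | z <- s].
have size_t : size t == n.
  rewrite -mass_eta size_flatten /shape -map_comp sumnE big_map.
  by apply/eqP; apply: eq_big => [z|z _]; rewrite /= ?in_setT ?size_nseq.
exists (tnth (Tuple size_t)); apply: funext => z.
rewrite phi_count map_tnth_enum /= count_flatten -map_comp sumnE big_map.
transitivity (\sum_(x <- s) eta x *+ (x == z)).
  by apply: eq_bigr => x _; rewrite /= count_nseq /=; case: (x == z); rewrite ?mul1n.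
by rewrite sumr_mulrn_eq // mem_s; case: (eta z).
Qed.

Lemma in_Omega_phi (V : choiceType) (Lam : pred nat) n (eta : V -> nat) :
  in_Omega Lam n eta -> exists y : 'I_n -> V, phi y = eta.
Proof. by case=> _ []; apply: phi_onto. Qed.

Lemma in_Vn_phi (V : choiceType) (Lam : pred nat) m (y : 'I_m -> V) :
  in_Vn Lam y <-> forall z, Lam (phi y z).
Proof.
split=> [[] //|Lam_y]; split=> //; split; last exact: mass_phi.
apply: (sub_finite_set _ (finite_seq (codom y))) => z /= y_z.
by apply: contraNT y_z => /phi_notin_codom ->.
Qed.

Lemma in_Vn_drop_coord (V : choiceType) (Lam : pred nat) m (x : 'I_m.+1 -> V) i :
  (forall k, Lam k.+1 -> Lam k) -> in_Vn Lam x -> in_Vn Lam (drop_coord x i).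
Proof.
move=> Lam_down /in_Vn_phi Lam_x; apply/in_Vn_phi => z.
rewrite phi_drop_coord /sub_delta; case: eqP => _ //.
by move: (Lam_x z); case: (phi x z) => //= k /Lam_down.
Qed.

Lemma Aop_phi (V : choiceType) (R : realType) m (y : 'I_m -> V) (f : (V -> nat) -> R) :
  Aop f (phi y) = \sum_(i < m) f (sub_delta (phi y) (y i)).
Proof.
rewrite /Aop -(fsbig_phi y (fun z => f (sub_delta (phi y) z))).
apply: eq_fsbigr => z _.
by rewrite /a_op mulr_natl; case: (phi y z).
Qed.

Lemma Aop_in_Omega0 (V : choiceType) (Lam : pred nat) (R : realType)
    (f : (V -> nat) -> R) eta :
  in_Omega Lam 0 eta -> Aop f eta = 0.
Proof. by case/in_Omega_phi => y <-; rewrite Aop_phi big_ord0. Qed.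

Lemma Uphi_Aop (V : choiceType) (R : realType) n (f : (V -> nat) -> R) :
  Uphi (n := n.+1) (Aop f) = Pi (Uphi f).
Proof.
apply: funext => x; rewrite /Uphi Aop_phi.
by apply: eq_bigr => i _; rewrite phi_drop_coord.
Qed.

Lemma perm_invariant_factor (V : choiceType) (Lam : pred nat) (R : nmodType) n
    (g : ('I_n -> V) -> R) :
  perm_invariant Lam g ->
  exists f : (V -> nat) -> R, forall y, in_Vn Lam y -> Uphi f y = g y.
Proof.
move=> g_inv.
exists (fun eta => if pselect (exists y, phi y = eta) is left y_eta
                   then g (projT1 (cid y_eta)) else 0).
move=> y y_Vn; rewrite /Uphi; case: pselect => [y_eta|[]]; last by exists y.
case: (cid y_eta) => y0 /= /esym/phi_eq_perm[s ->].
exact: g_inv.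
Qed.

Lemma op_on_cst0 (X : Type) (R : realType) (P : X -> Prop) (T : (X -> R) -> (X -> R)) x :
  op_on P T -> P x -> T (fun _ => 0) x = 0.
Proof.
move=> [T_local T_linear] Px.
have := T_linear 1 (fun _ => 0) (fun _ => 0) x Px.
rewrite !mul1r (T_local (fun _ => 0 + 0) (fun _ => 0)) // => [T0|y _]; last first.
  by rewrite addr0.
by apply: (addrI (T (fun _ => 0) x)); rewrite addr0 -T0.
Qed.

Section Intertwining.

Variables (V : choiceType) (Lam : pred nat) (R : realType).
Hypothesis Lam_down : forall k, Lam k.+1 -> Lam k.
Variable L : forall n, (('I_n -> V) -> R) -> (('I_n -> V) -> R).
Arguments L : clear implicits.
Variable LL : ((V -> nat) -> R) -> ((V -> nat) -> R).
Hypothesis L_Uphi : forall n f (x : 'I_n -> V),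
  in_Vn Lam x -> L n (Uphi f) x = Uphi (LL f) x.

Lemma Pi_eq_on n (g g' : ('I_n -> V) -> R) x :
  (forall y, in_Vn Lam y -> g y = g' y) -> in_Vn Lam x -> Pi g x = Pi g' x.
Proof.
by move=> gg' x_Vn; apply: eq_bigr => i _; apply/gg'/in_Vn_drop_coord.
Qed.

Lemma LL_Aop_phi n f (x : 'I_n.+1 -> V) :
  in_Vn Lam x -> LL (Aop f) (phi x) = L n.+1 (Pi (Uphi f)) x.
Proof. by move=> x_Vn; rewrite -Uphi_Aop L_Uphi. Qed.

Lemma Aop_LL_phi n f (x : 'I_n.+1 -> V) :
  in_Vn Lam x -> Aop (LL f) (phi x) = Pi (L n (Uphi f)) x.
Proof.
move=> x_Vn; rewrite -[LHS]/(Uphi (Aop (LL f)) x) Uphi_Aop.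
by apply: Pi_eq_on => // y y_Vn; rewrite L_Uphi.
Qed.

End Intertwining.

Theorem theorem2p7 (V : countType) (Lam : pred nat) (R : realType)
  (HLam : forall k : nat, Lam k.+1 -> Lam k)
  (L : forall n : nat, (('I_n -> V) -> R) -> (('I_n -> V) -> R))
  (LL : ((V -> nat) -> R) -> ((V -> nat) -> R))
  (HL : forall n : nat, op_on (@in_Vn V Lam n) (L n))
  (HLL : forall n : nat, op_on (in_Omega Lam n) LL)
  (Hinter : forall (n : nat) (f : (V -> nat) -> R) (x : 'I_n -> V),
     in_Vn Lam x -> L n (Uphi (n:=n) f) x = Uphi (n:=n) (LL f) x) :
  (forall (n : nat) (g : ('I_n -> V) -> R), perm_invariant Lam g ->
     forall x : 'I_n.+1 -> V, in_Vn Lam x ->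
       L n.+1 (Pi g) x = Pi (L n g) x)
  <->
  (forall (f : (V -> nat) -> R) (eta : V -> nat), in_OmegaAll Lam eta ->
     LL (Aop f) eta = Aop (LL f) eta).
Proof.
split=> [Pi_comm f eta [n eta_n] | A_comm n g g_inv x x_Vn].
- have [y phi_y] := in_Omega_phi eta_n; subst eta.
  case: n y eta_n => [|n] y y_Vn.
    rewrite Aop_phi big_ord0 ((HLL 0%N).1 _ (fun _ => 0) (Aop_in_Omega0 f)) //.
    exact: op_on_cst0 (HLL 0%N) y_Vn.
  rewrite (LL_Aop_phi Hinter) // (Aop_LL_phi HLam Hinter) //.
  by apply: Pi_comm => // s w _; rewrite /Uphi phi_comp_perm.
- have [f f_g] := perm_invariant_factor g_inv.
  rewrite ((HL n.+1).1 _ (Pi (Uphi f))) //; last first.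
    by move=> w w_Vn; apply: (Pi_eq_on HLam) => // y /f_g.
  rewrite -(LL_Aop_phi Hinter) // A_comm; last by exists n.+1.
  rewrite (Aop_LL_phi HLam Hinter) //; apply: (Pi_eq_on HLam) => // y y_Vn.
  exact: (HL n).1.
Qed.
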